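(* Let $\alpha\in\mathbb{R}\setminus\{0\}$, $\vartheta\in(0,\pi)$, and let $k>0$ with $k\notin\mathbb{N}$. Put $g(k)=\cos k\pi+\frac{\alpha}{4k}\sin k\pi$ and assume $|g(k)|\ge1$. Define $$f(k)=-\cos k\pi+\frac{\sin^2 k\pi}{\frac{\alpha}{4k}\sin k\pi\pm\sqrt{g(k)^2-1}},$$ where the sign $\pm$ is the sign of $g(k)$. Then: (a) The equation $\cos k\vartheta=f(k)$ (the eigenvalue condition for $H^+$) holds if and only if $$\frac{\alpha}{2k}(1+\cos k\vartheta\cos k\pi)(\cos k\vartheta+\cos k\pi)=\sin k\pi\,(1+2\cos k\vartheta\cos k\pi+\cos^2 k\vartheta).$$ (b) The equation $-\cos k\vartheta=f(k)$ (the eigenvalue condition for $H^-$) holds if and only if $$\frac{\alpha}{2k}(1-\cos k\vartheta\cos k\pi)(-\cos k\vartheta+\cos k\pi)=\sin k\pi\,(1-2\cos k\vartheta\cos k\pi+\cos^2 k\vartheta).$$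
   Context: For non-integer $k>0$ with $|g(k)|\ge1$, the number $k^2$ is an eigenvalue of the even (resp. odd) part $H^+$ (resp. $H^-$) of the bent chain Hamiltonian if and only if $\cos k\vartheta=f(k)$ (resp. $-\cos k\vartheta=f(k)$). Here the bent chain is a chain of rings of circumference $2\pi$ coupled by $\delta$-couplings of strength $\alpha$ at the touching points, with one ring split into arcs of lengths $\pi\pm\vartheta$. The claim is a purely analytic equivalence of the two displayed equations. *)

From Stdlib Require Import Reals.
Open Scope R_scope.

Definition gfun (alpha k : R) : R :=
  cos (k * PI) + alpha / (4 * k) * sin (k * PI).

(* sign of g(k): +1 if g(k) >= 0, -1 otherwise (under |g(k)| >= 1 this is the
   sign of g(k), which is never 0) *)
Definition sgn_g (alpha k : R) : R :=
  if Rle_dec 0 (gfun alpha k) then 1 else -1.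

Definition ffun (alpha k : R) : R :=
  - cos (k * PI)
  + (sin (k * PI)) ^ 2
    / (alpha / (4 * k) * sin (k * PI)
       + sgn_g alpha k * sqrt ((gfun alpha k) ^ 2 - 1)).

(** Write [c = cos kπ], [s = sin kπ], [a = α/(4k)], [g = c + a s] and
    [t = ±√(g² - 1)], so that [g ± t] are the two Floquet multipliers, with
    product [1].  For [u = x + c], clearing the denominator turns
    [x = -c + s²/(a s + t)] into [t u = s² - a s u]; squaring, and using
    [t² = g² - 1] and [c² + s² = 1], gives [s] times the quadratic equation of
    the statement.  Conversely the quadratic equation yields
    [t u = ±(s² - a s u)]; the wrong sign corresponds to the multiplier
    [μ = g - t] of modulus [< 1], and forces [(x² - 1)(μ - c)² = s²(1 - μ²) > 0],
    which is impossible for [x = ±cos kϑ]. *)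
From Stdlib Require Import Reals Lra Psatz ZArith.
Open Scope R_scope.

Lemma sin_mult_PI_neq0 (k : R) :
  0 <= k -> (forall n : nat, k <> INR n) -> sin (k * PI) <> 0.
Proof.
  intros Hk Hn Hsin.
  destruct (sin_eq_0_0 _ Hsin) as [z Hz].
  pose proof (PI_RGT_0) as HPI.
  assert (Hkz : k = IZR z) by (apply (Rmult_eq_reg_r PI); lra).
  assert (Hz0 : (0 <= z)%Z) by (apply le_IZR; lra).
  apply (Hn (Z.to_nat z)).
  now rewrite INR_IZR_INZ, Z2Nat.id.
Qed.

Lemma sgn_g_sqrt_sq (alpha k : R) :
  1 <= Rabs (gfun alpha k) ->
  (sgn_g alpha k * sqrt (gfun alpha k ^ 2 - 1)) ^ 2 = gfun alpha k ^ 2 - 1.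
Proof.
  intros Hg.
  assert (Hg2 : 0 <= gfun alpha k ^ 2 - 1).
  { rewrite <- (pow2_abs (gfun alpha k)). nra. }
  pose proof (sqrt_sqrt _ Hg2) as Hsq.
  unfold sgn_g. destruct (Rle_dec 0 (gfun alpha k)); nra.
Qed.

Lemma sgn_g_sqrt_same_sign (alpha k : R) :
  0 <= gfun alpha k * (sgn_g alpha k * sqrt (gfun alpha k ^ 2 - 1)).
Proof.
  pose proof (sqrt_pos (gfun alpha k ^ 2 - 1)) as Hsq.
  unfold sgn_g. destruct (Rle_dec 0 (gfun alpha k)); nra.
Qed.

Section MultiplierEquation.

Variables a c s t : R.
Hypothesis s_neq0 : s <> 0.
Hypothesis cs_circle : c ^ 2 + s ^ 2 = 1.
Hypothesis t_sq : t ^ 2 = (c + a * s) ^ 2 - 1.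
Hypothesis t_same_sign : 0 <= (c + a * s) * t.

Lemma multiplier_denominator_neq0 : a * s + t <> 0.
Proof.
  intros HD.
  assert (Ht : t = - (a * s)) by lra.
  subst t.
  assert (Hs2 : s = 2 * a * c).
  { apply (Rmult_eq_reg_l s); [|exact s_neq0]. nra. }
  rewrite Hs2 in t_same_sign, s_neq0.
  apply s_neq0. nra.
Qed.

Lemma multiplier_branch_product (x : R) :
  (t * (x + c) - (s ^ 2 - a * s * (x + c)))
  * (t * (x + c) + (s ^ 2 - a * s * (x + c)))
  = s * (2 * a * (1 + x * c) * (x + c) - s * (1 + 2 * x * c + x ^ 2)).
Proof.
  transitivity
    (s * (2 * a * (1 + x * c) * (x + c) - s * (1 + 2 * x * c + x ^ 2))
     + (t ^ 2 - ((c + a * s) ^ 2 - 1)) * (x + c) ^ 2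
     + (c ^ 2 + s ^ 2 - 1)
       * ((x + c) ^ 2 + 2 * a * s * (x + c) - s ^ 2)).
  - ring.
  - rewrite t_sq, cs_circle. ring.
Qed.

(** The conjugate multiplier [μ = c + a s - t] satisfies [μ² < 1] as soon as
    [t ≠ 0], since [g t ≥ 0] and [(g t)² = g²(g² - 1) > (g² - 1)²]. *)
Lemma conjugate_branch_sq_gt1 (x : R) :
  t <> 0 -> (x + c) * (a * s - t) = s ^ 2 -> 1 < x ^ 2.
Proof.
  intros Ht0 Hconj.
  set (g := c + a * s) in *.
  set (mu := g - t).
  assert (Hxm : x * (mu - c) = 1 - c * mu) by (unfold mu, g in *; nra).
  assert (Hkey : (x ^ 2 - 1) * (mu - c) ^ 2 = s ^ 2 * (1 - mu ^ 2)).
  { replace ((x ^ 2 - 1) * (mu - c) ^ 2)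
      with ((x * (mu - c)) ^ 2 - (mu - c) ^ 2) by ring.
    rewrite Hxm. replace (s ^ 2) with (1 - c ^ 2) by lra. ring. }
  assert (Ht2 : 0 < t ^ 2) by (rewrite <- Rsqr_pow2; exact (Rsqr_pos_lt _ Ht0)).
  assert (Hgt : g ^ 2 - 1 < g * t).
  { assert ((g ^ 2 - 1) ^ 2 < (g * t) ^ 2).
    { replace ((g * t) ^ 2) with (g ^ 2 * t ^ 2) by ring. rewrite t_sq. nra. }
    nra. }
  assert (Hmu : mu ^ 2 < 1).
  { unfold mu. replace ((g - t) ^ 2) with (g ^ 2 - 2 * g * t + t ^ 2) by ring.
    lra. }
  assert (Hs2 : 0 < s ^ 2)
    by (rewrite <- Rsqr_pow2; exact (Rsqr_pos_lt _ s_neq0)).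
  assert (0 < s ^ 2 * (1 - mu ^ 2)) by (apply Rmult_lt_0_compat; lra).
  assert (Hmc : 0 <= (mu - c) ^ 2) by apply pow2_ge_0.
  destruct (Rle_lt_dec (x ^ 2) 1); [nra | lra].
Qed.

Lemma multiplier_eq_iff (x : R) :
  x ^ 2 <= 1 ->
  (x = - c + s ^ 2 / (a * s + t) <->
   2 * a * (1 + x * c) * (x + c) = s * (1 + 2 * x * c + x ^ 2)).
Proof.
  intros Hx.
  pose proof (multiplier_denominator_neq0) as HD.
  pose proof (multiplier_branch_product x) as Hprod.
  assert (Hcleared : x = - c + s ^ 2 / (a * s + t)
                     <-> t * (x + c) - (s ^ 2 - a * s * (x + c)) = 0).
  { split; intros H.
    - assert (Hu : (x + c) * (a * s + t) = s ^ 2)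
        by (rewrite H; field; exact HD).
      lra.
    - apply (Rmult_eq_reg_r (a * s + t)); [|exact HD].
      field_simplify; [lra | exact HD]. }
  rewrite Hcleared. split; intros H.
  - rewrite H, Rmult_0_l in Hprod.
    destruct (Rmult_integral _ _ (eq_sym Hprod)); [contradiction | lra].
  - assert (Hzero : (t * (x + c) - (s ^ 2 - a * s * (x + c)))
                    * (t * (x + c) + (s ^ 2 - a * s * (x + c))) = 0)
      by (rewrite Hprod, H; ring).
    destruct (Rmult_integral _ _ Hzero) as [Hgood | Hbad]; [exact Hgood|].
    destruct (Req_dec t 0) as [Ht0 | Ht0]; [subst t; lra|].
    assert (Hconj : (x + c) * (a * s - t) = s ^ 2) by lra.
    pose proof (conjugate_branch_sq_gt1 x Ht0 Hconj). lra.
Qed.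

End MultiplierEquation.

Theorem proposition4p1 (alpha theta k : R) :
  alpha <> 0 ->
  0 < theta < PI ->
  0 < k ->
  (forall n : nat, k <> INR n) ->
  1 <= Rabs (gfun alpha k) ->
  (cos (k * theta) = ffun alpha k <->
     alpha / (2 * k) * (1 + cos (k * theta) * cos (k * PI))
       * (cos (k * theta) + cos (k * PI))
     = sin (k * PI) * (1 + 2 * cos (k * theta) * cos (k * PI)
                       + cos (k * theta) ^ 2))
  /\
  (- cos (k * theta) = ffun alpha k <->
     alpha / (2 * k) * (1 - cos (k * theta) * cos (k * PI))
       * (- cos (k * theta) + cos (k * PI))
     = sin (k * PI) * (1 - 2 * cos (k * theta) * cos (k * PI)
                       + cos (k * theta) ^ 2)).
Proof.
  intros _ _ Hk Hn Hg.
  pose proof (sin_mult_PI_neq0 k (Rlt_le _ _ Hk) Hn) as Hs.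
  assert (Hcs : cos (k * PI) ^ 2 + sin (k * PI) ^ 2 = 1)
    by (rewrite <- (sin2_cos2 (k * PI)); unfold Rsqr; ring).
  assert (Hx : cos (k * theta) ^ 2 <= 1)
    by (pose proof (COS_bound (k * theta)); nra).
  pose proof (sgn_g_sqrt_sq alpha k Hg) as Ht.
  pose proof (sgn_g_sqrt_same_sign alpha k) as Hgt.
  assert (Ha : alpha / (2 * k) = 2 * (alpha / (4 * k))) by (field; lra).
  unfold ffun. rewrite Ha. split.
  - exact (multiplier_eq_iff _ _ _ _ Hs Hcs Ht Hgt _ Hx).
  - replace (1 - cos (k * theta) * cos (k * PI))
      with (1 + (- cos (k * theta)) * cos (k * PI)) by ring.
    replace (1 - 2 * cos (k * theta) * cos (k * PI) + cos (k * theta) ^ 2)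
      with (1 + 2 * (- cos (k * theta)) * cos (k * PI) + (- cos (k * theta)) ^ 2)
      by ring.
    apply (multiplier_eq_iff _ _ _ _ Hs Hcs Ht Hgt). nra.
Qed.
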